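(* Let $K=2$ and suppose that for every horizon $T$ (a multiple of $100$) a valid pair $(\eta,\gamma)=(\eta_T,\gamma_T)$ in the non-trivial regime is chosen. Then there exists $T_0$ such that for all $T\ge T_0$, WSU-UX run on the two-phase loss sequence satisfies $$\mathbb{E}\Bigl[\sum_{t=1}^T\Bigl(\hat\ell_{t,1}-\sum_{j\in\{1,2\}}\pi_{t,j}\hat\ell_{t,j}\Bigr)^2\Bigr]\ge \frac{1}{1600}\,\frac{TK}{\gamma}.$$
   Context: WSU-UX. Fix integers $K\ge 2$ and $T\ge 1$ and hyperparameters $\eta,\gamma$. The pair $(\eta,\gamma)$ is called valid if $\eta,\gamma\in(0,1/2)$ and $\eta K/\gamma\le 1/2$. Given a fixed loss sequence $\ell_t\in[0,1]^K$, WSU-UX sets $\pi_{1,i}=1/K$ and in each round $t$: forms $\tilde\pi_{t,i}=(1-\gamma)\pi_{t,i}+\gamma/K$; draws $I_t$ with $\Pr(I_t=i\mid\mathcal F_{t-1})=\tilde\pi_{t,i}$; sets $\hat\ell_{t,i}=\ell_{t,i}\mathbf 1[I_t=i]/\tilde\pi_{t,i}$; and updates $\pi_{t+1,i}=\pi_{t,i}\bigl(1-\eta(\hat\ell_{t,i}-\sum_{j}\pi_{t,j}\hat\ell_{t,j})\bigr)$; $\mathcal F_t$ is the history generated by $I_1,\dots,I_t$. Non-trivial regime: $\eta\ge T^{-2/3}$ and $\gamma\le T^{-1/3}$. Two-phase loss sequence ($K=2$, $T$ a multiple of $100$, $T_1=T/100$): $\ell_{t,1}=1,\ell_{t,2}=0$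 for $1\le t\le T_1$ and $\ell_{t,1}=0,\ell_{t,2}=1$ for $T_1<t\le T$. *)

From HB Require Import structures.
From mathcomp Require Import all_boot all_order all_algebra.
From mathcomp Require Import all_classical all_reals.
From mathcomp Require Import exp.
Set Implicit Arguments. Unset Strict Implicit. Unset Printing Implicit Defensive.
Import Order.TTheory GRing.Theory Num.Theory.
Local Open Scope ring_scope.

Section WSUUX.
Variables (R : realType) (K : nat) (eta gamma : R).
(* loss t i = l_{t,i}, rounds t are 1-based: t = 1, ..., T *)
Variable loss : nat -> 'I_K -> R.

Definition valid_params : Prop :=
  0 < eta < 1/2 /\ 0 < gamma < 1/2 /\ eta * K%:R / gamma <= 1/2.

Definition mix (pi : 'I_K -> R) (i : 'I_K) : R :=
  (1 - gamma) * pi i + gamma / K%:R.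

Definition lhat (t : nat) (pi : 'I_K -> R) (It : 'I_K) (i : 'I_K) : R :=
  loss t i * (i == It)%:R / mix pi i.

Definition avg_lhat (t : nat) (pi : 'I_K -> R) (It : 'I_K) : R :=
  \sum_(j < K) pi j * lhat t pi It j.

Definition update (t : nat) (pi : 'I_K -> R) (It : 'I_K) : 'I_K -> R :=
  fun i => pi i * (1 - eta * (lhat t pi It i - avg_lhat t pi It)).

Definition step (st : nat * ('I_K -> R)) (It : 'I_K) : nat * ('I_K -> R) :=
  (st.1.+1, update st.1.+1 st.2 It).

(* pi_{t+1} as a function of the history h = [:: I_1; ...; I_t]
   (pi_1 = uniform, for the empty history) *)
Definition pi_after (h : seq 'I_K) : 'I_K -> R :=
  (foldl step (0%N, fun _ => 1 / K%:R) h).2.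

(* Probability of the full path p = (I_1, ..., I_T) :
   prod_t tilde pi_{t, I_t}, where pi_t depends on I_1..I_{t-1}. *)
Definition path_prob (T : nat) (p : T.-tuple 'I_K) : R :=
  \prod_(t < T) mix (pi_after (take t p)) (tnth p t).

Definition wsu_expect (T : nat) (X : T.-tuple 'I_K -> R) : R :=
  \sum_(p : T.-tuple 'I_K) path_prob p * X p.

(* sum_{t=1}^T (hat l_{t,a} - sum_j pi_{t,j} hat l_{t,j})^2 along path p;
   round t+1 (1-based) corresponds to index t : 'I_T *)
Definition sq_dev_sum (T : nat) (a : 'I_K) (p : T.-tuple 'I_K) : R :=
  \sum_(t < T)
    (lhat t.+1 (pi_after (take t p)) (tnth p t) a
     - avg_lhat t.+1 (pi_after (take t p)) (tnth p t)) ^+ 2.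

End WSUUX.

Definition nontrivial_regime (R : realType) (T : nat) (eta gamma : R) : Prop :=
  (T%:R `^ (- (2%:R / 3%:R)) <= eta) /\ (gamma <= T%:R `^ (- (1 / 3%:R))).

(* Two-phase loss sequence, K = 2, arm 1 = ord0, arm 2 = ord_max (=1);
   T1 = T / 100. *)
Definition two_phase_loss (R : realType) (T : nat) (t : nat) (i : 'I_2) : R :=
  if (t <= T %/ 100)%N then (i == ord0)%:R else (i != ord0)%:R.

Arguments wsu_expect {R K} eta gamma loss T X.
Arguments sq_dev_sum {R K} eta gamma loss T a p.

From HB Require Import structures.
From mathcomp Require Import all_boot all_order all_algebra.
From mathcomp Require Import all_classical all_reals.
From mathcomp Require Import exp.
From mathcomp Require Import ring lra.
Import Order.TTheory GRing.Theory Num.Theory.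
Local Open Scope ring_scope.
Set Implicit Arguments. Unset Strict Implicit. Unset Printing Implicit Defensive.

(* While the first arm has loss 1 and the second loss 0, a round in which the
   first arm has weight [x] has conditional expected squared deviation
   [(1 - x)^2 / ((1 - gamma) x + gamma/2)], a convex function that decreases on
   [[0, 1]].  The expected weight of the first arm contracts by at least
   [1 - eta/2] per round as long as it is below [1/2], so by Jensen round [t]
   contributes at least the value at [(1 - eta/2)^t / 2].  In the non-trivial
   regime [(1 - eta/2)^t <= eta <= gamma/4] after [O(T^(5/6))] rounds, after
   which each round of the first phase contributes [>= 9/(16 gamma)]; summing
   over the [T/100] rounds of that phase gives [Omega(T/gamma)]. *)

Section Phase1Variance.
Variables (R : realFieldType) (g : R).

Definition mix2 (x : R) : R := (1 - g) * x + g / 2%:R.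

Definition phase1_var (x : R) : R := (1 - x) ^+ 2 / mix2 x.

Definition phase1_var_slope (z : R) : R :=
  - ((1 - z) * (mix2 z + (1 - g / 2%:R))) / mix2 z ^+ 2.

Lemma mix2_gt0 (x : R) : 0 < g < 1 -> 0 <= x -> 0 < mix2 x.
Proof.
move=> /andP[g_gt0 g_lt1] x_ge0.
have : 0 <= (1 - g) * x by apply: mulr_ge0; lra.
rewrite /mix2; lra.
Qed.

Lemma phase1_var_ge0 (x : R) : 0 < g < 1 -> 0 <= x -> 0 <= phase1_var x.
Proof.
by move=> g01 /(mix2_gt0 g01) ?; apply: divr_ge0; [exact: sqr_ge0 | exact: ltW].
Qed.

Lemma phase1_var_tangent (y z : R) : 0 < g < 1 -> 0 <= y -> 0 <= z ->
  phase1_var z + phase1_var_slope z * (y - z) <= phase1_var y.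
Proof.
move=> g01 /(mix2_gt0 g01) uy /(mix2_gt0 g01) uz.
have gap : phase1_var y - (phase1_var z + phase1_var_slope z * (y - z)) =
    (1 - g / 2%:R) ^+ 2 * (y - z) ^+ 2 / (mix2 y * mix2 z ^+ 2).
  move: uy uz; rewrite /phase1_var /phase1_var_slope /mix2 => uy uz.
  by field; rewrite !gt_eqF //; lra.
suff : 0 <= (1 - g / 2%:R) ^+ 2 * (y - z) ^+ 2 / (mix2 y * mix2 z ^+ 2) by lra.
by apply: divr_ge0; apply: mulr_ge0; rewrite ?sqr_ge0 ?exprn_ge0 ?ltW.
Qed.

Lemma phase1_var_slope_le0 (z : R) : 0 < g < 1 -> 0 <= z <= 1 ->
  phase1_var_slope z <= 0.
Proof.
move=> g01 /andP[z_ge0 z_le1]; have uz := mix2_gt0 g01 z_ge0.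
case/andP: g01 => g_gt0 g_lt1.
rewrite /phase1_var_slope mulNr oppr_le0.
by apply: divr_ge0; [apply: mulr_ge0; lra | exact: sqr_ge0].
Qed.

(* Jensen's inequality for the convex [phase1_var], combined with its
   monotonicity on [[0, 1]]. *)
Lemma phase1_var_le_mean (m0 m1 y0 y1 z : R) : 0 < g < 1 ->
  0 <= m0 -> 0 <= m1 -> m0 + m1 = 1 -> 0 <= y0 -> 0 <= y1 -> 0 <= z <= 1 ->
  m0 * y0 + m1 * y1 <= z -> phase1_var z <= m0 * phase1_var y0 + m1 * phase1_var y1.
Proof.
move=> g01 m0_ge0 m1_ge0 m_sum y0_ge0 y1_ge0 z01 mean_le.
have z_ge0 : 0 <= z by case/andP: z01.
have t0 := ler_wpM2l m0_ge0 (phase1_var_tangent g01 y0_ge0 z_ge0).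
have t1 := ler_wpM2l m1_ge0 (phase1_var_tangent g01 y1_ge0 z_ge0).
have : 0 <= phase1_var_slope z * (m0 * y0 + m1 * y1 - z).
  by apply: mulr_le0; [exact: phase1_var_slope_le0 | lra].
have m1E : m1 = 1 - m0 by lra.
have tangent_mean : m0 * (phase1_var z + phase1_var_slope z * (y0 - z)) +
      m1 * (phase1_var z + phase1_var_slope z * (y1 - z)) =
      phase1_var z + phase1_var_slope z * (m0 * y0 + m1 * y1 - z).
  by rewrite m1E; ring.
lra.
Qed.

Lemma phase1_var_ge (x : R) : 0 < g <= 1 / 2%:R -> 0 <= x <= g / 2%:R ->
  9%:R / 16%:R / g <= phase1_var x.
Proof.
move=> /andP[g_gt0 g_le] /andP[x_ge0 x_le].
have g01 : 0 < g < 1 by apply/andP; split; lra.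
have u_gt0 := mix2_gt0 g01 x_ge0.
have u_le : mix2 x <= g by rewrite /mix2; nra.
have sq_ge : 9%:R / 16%:R <= (1 - x) ^+ 2 by nra.
rewrite /phase1_var ler_pdivlMr //; apply: le_trans sq_ge.
by rewrite mulrAC ler_pdivrMr //; lra.
Qed.

End Phase1Variance.

Lemma sum_tuple_cons (T : finType) (V : nmodType) n (F : n.+1.-tuple T -> V) :
  \sum_(p : n.+1.-tuple T) F p = \sum_(i : T) \sum_(q : n.-tuple T) F [tuple of i :: q].
Proof.
rewrite pair_big /= (reindex (fun u : T * n.-tuple T => [tuple of u.1 :: u.2])) //=.
exists (fun p => (thead p, [tuple of behead p])) => [[i q] _ | p _].
  by congr pair; apply: val_inj.
by rewrite -tuple_eta.
Qed.

Section Process.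
Variables (R : realType) (K : nat) (eta gamma : R) (loss : nat -> 'I_K -> R).
Hypotheses (K_gt0 : (0 < K)%N) (params : valid_params K eta gamma)
  (loss01 : forall t i, 0 <= loss t i <= 1).

Definition prob_vec (pi : 'I_K -> R) : Prop :=
  (forall i, 0 <= pi i) /\ \sum_(i < K) pi i = 1.

Lemma prob_vec_uniform : prob_vec (fun _ => 1 / K%:R).
Proof.
split=> [i | ]; first by rewrite divr_ge0 ?ler0n.
by rewrite sumr_const card_ord -[_ *+ K]mulr_natr mul1r mulVf // pnatr_eq0 -lt0n.
Qed.

Lemma mix_ge (pi : 'I_K -> R) i : prob_vec pi -> gamma / K%:R <= mix gamma pi i.
Proof.
have [_ [/andP[_ g_lt] _]] := params; move=> [pi_ge0 _].
have : 0 <= (1 - gamma) * pi i by apply: mulr_ge0; [lra | exact: pi_ge0].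
rewrite /mix; lra.
Qed.

Lemma mix_gt0 (pi : 'I_K -> R) i : prob_vec pi -> 0 < mix gamma pi i.
Proof.
have [_ [/andP[g_gt0 _] _]] := params.
move/(mix_ge i); apply: lt_le_trans; apply: divr_gt0 => //.
by rewrite ltr0n.
Qed.

Lemma sum_mix (pi : 'I_K -> R) : prob_vec pi -> \sum_(i < K) mix gamma pi i = 1.
Proof.
move=> [_ sum_pi]; rewrite big_split /= -mulr_sumr sum_pi mulr1 sumr_const card_ord.
by rewrite -[_ *+ K]mulr_natr divfK ?subrK // pnatr_eq0 -lt0n.
Qed.

Lemma lhat_ge0 t (pi : 'I_K -> R) I i : prob_vec pi -> 0 <= lhat gamma loss t pi I i.
Proof.
move=> pv; have [l_ge0 _] := andP (loss01 t i).
by apply: divr_ge0; [apply: mulr_ge0 | exact/ltW/mix_gt0].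
Qed.

Lemma lhat_le t (pi : 'I_K -> R) I i : prob_vec pi -> lhat gamma loss t pi I i <= K%:R / gamma.
Proof.
have [_ [/andP[g_gt0 _] _]] := params; move=> pv.
have mix_pos := mix_gt0 i pv; have mix_lb := mix_ge i pv.
have [l_ge0 l_le1] := andP (loss01 t i).
have K_pos : 0 < K%:R :> R by rewrite ltr0n.
have ind_le1 : loss t i * (i == I)%:R <= 1 by case: (i == I); rewrite ?mulr1 ?mulr0.
have inv_mix : K%:R / gamma * (gamma / K%:R) = 1 by field; rewrite !gt_eqF.
have : K%:R / gamma * (gamma / K%:R) <= K%:R / gamma * mix gamma pi i.
  by apply: ler_wpM2l => //; apply: divr_ge0; apply: ltW.
rewrite /lhat ler_pdivrMr //; lra.
Qed.

Lemma avg_lhat_ge0 t (pi : 'I_K -> R) I : prob_vec pi -> 0 <= avg_lhat gamma loss t pi I.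
Proof.
move=> pv; apply: sumr_ge0 => j _.
by apply: mulr_ge0; [exact: pv.1 | exact: lhat_ge0].
Qed.

(* Each factor [1 - eta (lhat - avg_lhat)] is at least [1 - eta K / gamma >= 1/2]. *)
Lemma prob_vec_update t (pi : 'I_K -> R) I :
  prob_vec pi -> prob_vec (update eta gamma loss t pi I).
Proof.
have [/andP[eta_gt0 _] [/andP[g_gt0 _] eta_le]] := params; move=> pv.
split=> [i | ].
  have l_le := lhat_le t I i pv; have avg_ge0 := avg_lhat_ge0 t I pv.
  have : eta * lhat gamma loss t pi I i <= eta * (K%:R / gamma) by apply: ler_wpM2l => //; lra.
  rewrite mulrA => eta_l_le.
  by apply: mulr_ge0; [exact: pv.1 | nra].
rewrite /update.
transitivity (\sum_(i < K) (pi i * (1 + eta * avg_lhat gamma loss t pi I)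
                           - eta * (pi i * lhat gamma loss t pi I i))).
  by apply: eq_bigr => i _; ring.
by rewrite sumrB -mulr_suml -mulr_sumr pv.2 /avg_lhat; ring.
Qed.

Definition run (st : nat * ('I_K -> R)) (h : seq 'I_K) : nat * ('I_K -> R) :=
  foldl (step eta gamma loss) st h.

Lemma prob_vec_run st h : prob_vec st.2 -> prob_vec (run st h).2.
Proof. by elim: h st => [|i h IH] st pv //=; apply/IH/prob_vec_update. Qed.

Lemma run_round st h : (run st h).1 = (st.1 + size h)%N.
Proof. by elim: h st => [|i h IH] st /=; rewrite ?addn0 // IH addSnnS. Qed.

Definition prob_from st {n} (p : n.-tuple 'I_K) : R :=
  \prod_(t < n) mix gamma (run st (take t p)).2 (tnth p t).

Definition sq_dev (a : 'I_K) st I : R :=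
  (lhat gamma loss st.1.+1 st.2 I a - avg_lhat gamma loss st.1.+1 st.2 I) ^+ 2.

Definition sq_dev_from (a : 'I_K) st {n} (p : n.-tuple 'I_K) : R :=
  \sum_(t < n) sq_dev a (run st (take t p)) (tnth p t).

Definition expected_sq_dev (a : 'I_K) n st : R :=
  \sum_(p : n.-tuple 'I_K) prob_from st p * sq_dev_from a st p.

Lemma prob_from_cons st n i (q : n.-tuple 'I_K) :
  prob_from st [tuple of i :: q] = mix gamma st.2 i * prob_from (step eta gamma loss st i) q.
Proof.
rewrite /prob_from big_ord_recl /= tnth0; congr (_ * _).
by apply: eq_bigr => t _; rewrite tnthS.
Qed.

Lemma sq_dev_from_cons a st n i (q : n.-tuple 'I_K) :
  sq_dev_from a st [tuple of i :: q] = sq_dev a st i + sq_dev_from a (step eta gamma loss st i) q.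
Proof.
rewrite /sq_dev_from big_ord_recl /= tnth0; congr (_ + _).
by apply: eq_bigr => t _; rewrite tnthS.
Qed.

Lemma prob_from_ge0 st n (p : n.-tuple 'I_K) : prob_vec st.2 -> 0 <= prob_from st p.
Proof.
move=> pv; apply: prodr_ge0 => t _.
exact/ltW/mix_gt0/prob_vec_run.
Qed.

Lemma sum_prob_from st n : prob_vec st.2 -> \sum_(p : n.-tuple 'I_K) prob_from st p = 1.
Proof.
elim: n st => [|n IH] st pv.
  rewrite (big_pred1 [tuple]); first by rewrite /prob_from big_ord0.
  by move=> p; rewrite [p]tuple0 !inE eqxx.
rewrite sum_tuple_cons -(sum_mix pv); apply: eq_bigr => i _.
under eq_bigr do rewrite prob_from_cons.
by rewrite -mulr_sumr IH ?mulr1 //; exact: prob_vec_update.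
Qed.

Lemma expected_sq_devS a n st : prob_vec st.2 ->
  expected_sq_dev a n.+1 st = \sum_(i < K) mix gamma st.2 i *
    (sq_dev a st i + expected_sq_dev a n (step eta gamma loss st i)).
Proof.
move=> pv; rewrite /expected_sq_dev sum_tuple_cons; apply: eq_bigr => i _.
have pv_i := prob_vec_update st.1.+1 i pv.
rewrite mulrDr -[sq_dev a st i]mulr1 -(sum_prob_from (st := step eta gamma loss st i) n pv_i) !mulr_sumr -big_split.
by apply: eq_bigr => q _ /=; rewrite prob_from_cons sq_dev_from_cons; ring.
Qed.

Lemma expected_sq_dev_ge0 a n st : prob_vec st.2 -> 0 <= expected_sq_dev a n st.
Proof.
move=> pv; apply: sumr_ge0 => p _; apply: mulr_ge0; first exact: prob_from_ge0.
by apply: sumr_ge0 => t _; exact: sqr_ge0.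
Qed.

Lemma expected_sq_dev_mono a st : prob_vec st.2 ->
  {homo expected_sq_dev a ^~ st : n m / (n <= m)%N >-> n <= m}.
Proof.
move=> pv; apply: homo_leq => [x|y x z|n]; [exact: lexx | exact: le_trans |].
elim: n st pv => [|n IH] st pv.
  rewrite [X in X <= _]big1 => [|p _]; first exact: expected_sq_dev_ge0.
  by rewrite /sq_dev_from big_ord0 mulr0.
rewrite !expected_sq_devS //; apply: ler_sum => i _.
apply: ler_wpM2l; first exact/ltW/mix_gt0.
by rewrite lerD2l; apply/IH/prob_vec_update.
Qed.

End Process.

Lemma bernoulli_le1 (R : realFieldType) (x : R) n : 0 <= x <= 1 ->
  (1 - x) ^+ n * (1 + n%:R * x) <= 1.
Proof.
move=> /andP[x_ge0 x_le1]; elim: n => [|n IH]; first by rewrite expr0 mul0r addr0 mulr1.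
have pow_ge0 : 0 <= (1 - x) ^+ n by apply: exprn_ge0; lra.
have : 0 <= (1 - x) ^+ n * (n.+1%:R * x ^+ 2).
  by apply: mulr_ge0 => //; apply: mulr_ge0 => //; exact: sqr_ge0.
have -> : (1 - x) ^+ n.+1 * (1 + n.+1%:R * x) =
    (1 - x) ^+ n * (1 + n%:R * x) - (1 - x) ^+ n * (n.+1%:R * x ^+ 2).
  by rewrite exprS -addn1 natrD; ring.
lra.
Qed.

(* Take [k = 4 m] with [m x > 2 w]: Bernoulli gives [(1 - x/2)^m <= 1/w], so
   [(1 - x/2)^k <= w^-4 <= x]. *)
Lemma exists_decay_time (R : archiRealFieldType) (x w : R) :
  0 < x <= 1 -> 1 <= w -> 1 <= x * w ^+ 4 ->
  exists k : nat, (1 - x / 2%:R) ^+ k <= x /\ k%:R <= 8%:R * w ^+ 5 + 4%:R.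
Proof.
move=> /andP[x_gt0 x_le1] w_ge1 xw4_ge1.
set m := (Num.truncn (2%:R * w / x)).+1.
have m_gt : 2%:R * w < m%:R * x by rewrite -ltr_pdivrMr // truncnS_gt.
have m_le : m%:R <= 2%:R * w ^+ 5 + 1.
  rewrite /m -addn1 natrD lerD2r; apply: le_trans (_ : 2%:R * w / x <= _).
    by rewrite truncn_le; apply: divr_ge0; lra.
  rewrite ler_pdivrMr //; have : 0 <= 2%:R * w * (x * w ^+ 4 - 1) by apply: mulr_ge0; lra.
  by rewrite [w ^+ 5]exprS; lra.
set y := (1 - x / 2%:R) ^+ m.
have y_ge0 : 0 <= y by apply: exprn_ge0; lra.
have yw_le1 : y * w <= 1.
  have : y * (1 + m%:R * (x / 2%:R)) <= 1 by apply: bernoulli_le1; apply/andP; split; lra.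
  have : y * w <= y * (1 + m%:R * (x / 2%:R)) by apply: ler_wpM2l => //; lra.
  lra.
exists (4 * m)%N; split; last by rewrite natrM; lra.
have w4_gt0 : 0 < w ^+ 4 by apply: exprn_gt0; lra.
have : (y * w) ^+ 4 <= 1 by apply: exprn_ile1 => //; apply: mulr_ge0 => //; lra.
rewrite mulnC exprM -/y exprMn -ler_pdivlMr // => y4_le.
by apply: le_trans y4_le _; rewrite ler_pdivrMr // mulrC.
Qed.

Lemma exists_decay_time_le (R : realType) (T : nat) (x : R) :
  1100%:R ^+ 6 <= T%:R :> R -> 0 < x <= 1 -> T%:R `^ (- (2%:R / 3%:R)) <= x ->
  exists k : nat, (1 - x / 2%:R) ^+ k <= x /\ k%:R <= 7%:R / 900%:R * T%:R :> R.
Proof.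
move=> T_ge x01 T_pow_le.
set w : R := T%:R `^ (1 / 6%:R).
have w_ge0 : 0 <= w by apply: powR_ge0.
have w_pow n : w ^+ n = T%:R `^ (n%:R / 6%:R).
  by rewrite -powR_mulrn ?ler0n // -powRrM mulrC mul1r.
have T_w6 : T%:R = w ^+ 6 by rewrite w_pow divff ?powRr1 ?ler0n // pnatr_eq0.
have w_ge : 1100%:R <= w.
  by rewrite -(ler_pXn2r (isT : (0 < 6)%N)) ?nnegrE ?ler0n // -T_w6.
have w4_gt0 : 0 < w ^+ 4 by apply: exprn_gt0; lra.
have xw4_ge1 : 1 <= x * w ^+ 4.
  have two_thirds : 2%:R / 3%:R = 4%:R / 6%:R :> R by field.
  by rewrite -ler_pdivrMr // div1r w_pow -powRN -two_thirds.
have w_ge1 : 1 <= w by lra.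
have [k [decay k_le]] := exists_decay_time x01 w_ge1 xw4_ge1.
exists k; split => //; apply: le_trans k_le _.
have w5_ge : 1100%:R <= w ^+ 5.
  by apply: le_trans w_ge _; rewrite exprS ler_peMr // exprn_ege1.
have : 0 <= w ^+ 5 * (7%:R / 900%:R * w - 17%:R / 2%:R).
  by apply: mulr_ge0; lra.
rewrite T_w6 exprS [w * _]mulrC; lra.
Qed.

Lemma sumr_ge_tail (R : numDomainType) (F : nat -> R) (B : R) (k0 n : nat) :
  (forall k, 0 <= F k) -> (forall k, (k0 <= k)%N -> B <= F k) ->
  (n - k0)%:R * B <= \sum_(k < n) F k.
Proof.
move=> F_ge0 F_ge; case: (leqP k0 n) => [k0_le | /ltnW n_le].
  rewrite -(big_mkord xpredT) (@big_cat_nat _ _ _ k0) //=.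
  rewrite -[X in X <= _]add0r; apply: lerD; first exact: sumr_ge0.
  by rewrite mulr_natl -sumr_const_nat; apply: ler_sum_nat => k /andP[/F_ge].
have -> : (n - k0)%N = 0%N by apply/eqP; rewrite subn_eq0.
by rewrite mul0r; apply: sumr_ge0.
Qed.

Lemma phase1_var_sum_ge (R : realType) (T : nat) (eta gamma : R) :
  1100%:R ^+ 6 <= T%:R :> R -> (100 %| T)%N -> 0 < gamma <= 1 / 2%:R ->
  0 < eta <= gamma / 4%:R -> T%:R `^ (- (2%:R / 3%:R)) <= eta ->
  1 / 1600%:R * (T%:R * 2%:R / gamma) <=
    \sum_(k < T %/ 100) phase1_var gamma (1 / 2%:R * (1 - eta / 2%:R) ^+ k).
Proof.
move=> T_ge T_div g_range /andP[eta_gt0 eta_le] T_pow_le.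
have [g_gt0 g_le] := andP g_range.
have eta01 : 0 < eta <= 1 by apply/andP; split; lra.
have [k0 [decay k0_le]] := exists_decay_time_le T_ge eta01 T_pow_le.
have c_ge0 : 0 <= 1 - eta / 2%:R by lra.
have c_le1 : 1 - eta / 2%:R <= 1 by lra.
have g01 : 0 < gamma < 1 by apply/andP; split; lra.
have F_ge0 k : 0 <= phase1_var gamma (1 / 2%:R * (1 - eta / 2%:R) ^+ k).
  by apply: phase1_var_ge0 => //; apply: mulr_ge0; [lra | exact: exprn_ge0].
have F_tail k : (k0 <= k)%N ->
    9%:R / 16%:R / gamma <= phase1_var gamma (1 / 2%:R * (1 - eta / 2%:R) ^+ k).
  move=> k_ge; apply: phase1_var_ge => //.
  have : (1 - eta / 2%:R) ^+ k <= (1 - eta / 2%:R) ^+ k0 by exact: ler_wiXn2l.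
  have : 0 <= (1 - eta / 2%:R) ^+ k by exact: exprn_ge0.
  by move=> ? ?; apply/andP; split; lra.
have T1_T : (T %/ 100)%:R * 100%:R = T%:R :> R by rewrite -natrM divnK.
clear T_div.
have k0_le_T1 : (k0 <= T %/ 100)%N.
  by rewrite -(ler_nat R); lra.
apply: le_trans (sumr_ge_tail (T %/ 100) F_ge0 F_tail).
have g_neq0 : gamma != 0 by rewrite gt_eqF.
rewrite natrB // (_ : 1 / 1600%:R * _ = T%:R / 800%:R * gamma^-1); last by field.
set D := _ - _; rewrite (_ : D * _ = D * 9%:R / 16%:R * gamma^-1); last by field.
by apply: ler_wpM2r; [rewrite invr_ge0 ltW | rewrite /D; lra].
Qed.

Lemma wsu_expect_sq_dev_sum (R : realType) K (eta gamma : R) loss T (a : 'I_K) :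
  wsu_expect eta gamma loss T (sq_dev_sum eta gamma loss T a) =
  expected_sq_dev eta gamma loss a T (0%N, fun _ => 1 / K%:R).
Proof.
apply: eq_bigr => p _; congr (_ * _); apply: eq_bigr => t _.
by rewrite /sq_dev run_round /= size_take size_tuple ltn_ord.
Qed.

Lemma sum_ord2 (V : nmodType) (F : 'I_2 -> V) : \sum_(i < 2) F i = F ord0 + F ord_max.
Proof. by rewrite big_ord_recl big_ord1; congr (_ + F _); apply: val_inj. Qed.

Lemma prob_vec2 (R : realType) (pi : 'I_2 -> R) : prob_vec pi -> pi ord_max = 1 - pi ord0.
Proof. by case=> _; rewrite sum_ord2 => <-; rewrite addrAC subrr add0r. Qed.

Lemma valid_params2_eta_le (R : realType) (eta gamma : R) :
  valid_params 2 eta gamma -> eta <= gamma / 4%:R.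
Proof.
move=> [_ [/andP[g_gt0 _] eta_le]].
by move: eta_le; rewrite ler_pdivrMr // => ?; lra.
Qed.

Section Phase1.
Variables (R : realType) (eta gamma : R) (loss : nat -> 'I_2 -> R) (T1 : nat).
Hypotheses (params : valid_params 2 eta gamma) (loss01 : forall t i, 0 <= loss t i <= 1)
  (phase1 : forall s, (s < T1)%N -> loss s.+1 ord0 = 1 /\ loss s.+1 ord_max = 0).
Let two_gt0 : (0 < 2)%N := isT.

Lemma phase1_sq_dev st : prob_vec st.2 -> (st.1 < T1)%N ->
  \sum_(i < 2) mix gamma st.2 i * sq_dev gamma loss ord0 st i = phase1_var gamma (st.2 ord0).
Proof.
move=> pv st_lt; have [l0 l1] := phase1 st_lt.
have m0 := mix_gt0 two_gt0 params ord0 pv; have m1 := mix_gt0 two_gt0 params ord_max pv.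
rewrite sum_ord2 /sq_dev /avg_lhat !sum_ord2 /lhat l0 l1 /= /phase1_var /mix2.
move: m0 m1; rewrite /mix (prob_vec2 pv) => m0 m1.
by field; rewrite !gt_eqF //; lra.
Qed.

Lemma phase1_step_arm0 st : prob_vec st.2 -> (st.1 < T1)%N ->
  (step eta gamma loss st ord0).2 ord0 =
  st.2 ord0 - eta * st.2 ord0 * (1 - st.2 ord0) / mix gamma st.2 ord0.
Proof.
move=> pv st_lt; have [l0 l1] := phase1 st_lt.
have m0 := mix_gt0 two_gt0 params ord0 pv; have m1 := mix_gt0 two_gt0 params ord_max pv.
rewrite /= /update /avg_lhat sum_ord2 /lhat l0 l1 /= (prob_vec2 pv).
by field; rewrite !gt_eqF.
Qed.

Lemma phase1_step_arm1 st : (st.1 < T1)%N -> (step eta gamma loss st ord_max).2 ord0 = st.2 ord0.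
Proof.
move=> st_lt; have [l0 l1] := phase1 st_lt.
by rewrite /= /update /avg_lhat sum_ord2 /lhat l0 l1 /= !(mul0r, mulr0, addr0, subrr, subr0, mulr1).
Qed.

Lemma phase1_mean_step st : prob_vec st.2 -> (st.1 < T1)%N ->
  mix gamma st.2 ord0 * (step eta gamma loss st ord0).2 ord0 +
  mix gamma st.2 ord_max * (step eta gamma loss st ord_max).2 ord0 =
  st.2 ord0 - eta * st.2 ord0 * (1 - st.2 ord0).
Proof.
move=> pv st_lt; have m0 := mix_gt0 two_gt0 params ord0 pv.
have := sum_mix gamma two_gt0 pv; rewrite sum_ord2 => m_sum.
rewrite phase1_step_arm0 // phase1_step_arm1 // (_ : mix gamma st.2 ord_max = 1 - mix gamma st.2 ord0).
  by field; rewrite gt_eqF.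
by rewrite -m_sum addrAC subrr add0r.
Qed.

Lemma phase1_expected_sq_dev_ge n st : prob_vec st.2 -> st.2 ord0 <= 1 / 2%:R ->
  (st.1 + n <= T1)%N ->
  \sum_(k < n) phase1_var gamma (st.2 ord0 * (1 - eta / 2%:R) ^+ k)
    <= expected_sq_dev eta gamma loss ord0 n st.
Proof.
have [/andP[eta_gt0 _] [/andP[g_gt0 g_lt] eta_le]] := params.
have g01 : 0 < gamma < 1 by apply/andP; split; lra.
have eta_small := valid_params2_eta_le params.
elim: n st => [|n IH] st pv a_le st_le.
  by rewrite big_ord0; exact: expected_sq_dev_ge0.
have st_lt : (st.1 < T1)%N by apply: leq_trans st_le; rewrite addnS ltnS leq_addr.
rewrite expected_sq_devS // sum_ord2 !mulrDr addrACA.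
have := phase1_sq_dev pv st_lt; rewrite sum_ord2 => ->.
rewrite big_ord_recl expr0 mulr1 lerD2l.
set s0 := step eta gamma loss st ord0; set s1 := step eta gamma loss st ord_max.
have pv0 : prob_vec s0.2 by exact: prob_vec_update.
have pv1 : prob_vec s1.2 by exact: prob_vec_update.
have m0 := mix_gt0 two_gt0 params ord0 pv; have m1 := mix_gt0 two_gt0 params ord_max pv.
have m_sum := sum_mix gamma two_gt0 pv; rewrite sum_ord2 in m_sum.
have a0_le : s0.2 ord0 <= st.2 ord0.
  rewrite phase1_step_arm0 // gerDl oppr_le0; apply: divr_ge0; last exact: ltW.
  by apply: mulr_ge0; [apply: mulr_ge0; [lra | exact: pv.1] | rewrite -(prob_vec2 pv); exact: pv.1].
have a1_eq : s1.2 ord0 = st.2 ord0 by exact: phase1_step_arm1.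
have next_le : (st.1.+1 + n <= T1)%N by rewrite addSnnS.
have IH0 := IH s0 pv0 (le_trans a0_le a_le) next_le.
have a1_le : s1.2 ord0 <= 1 / 2%:R by rewrite a1_eq.
have IH1 := IH s1 pv1 a1_le next_le.
apply: le_trans (lerD (ler_wpM2l (ltW m0) IH0) (ler_wpM2l (ltW m1) IH1)).
rewrite a1_eq !mulr_sumr -big_split; apply: ler_sum => k _; rewrite lift0.
have mean := phase1_mean_step pv st_lt; rewrite -/s0 -/s1 a1_eq in mean.
set a := st.2 ord0 in a_le a0_le mean *; set c := 1 - eta / 2%:R.
have a_ge0 : 0 <= a by exact: pv.1.
have c_ge0 : 0 <= c by rewrite /c; lra.
have c_le1 : c <= 1 by rewrite /c; lra.
have drift : a - eta * a * (1 - a) <= a * c.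
  have : 0 <= eta * a * (1 / 2%:R - a) by apply: mulr_ge0; [apply: mulr_ge0|]; lra.
  by rewrite /c; lra.
have ck_ge0 : 0 <= c ^+ k by exact: exprn_ge0.
have ck_le1 : c ^+ k.+1 <= 1 by exact: exprn_ile1.
apply: (phase1_var_le_mean g01 (ltW m0) (ltW m1) m_sum).
- exact: mulr_ge0 (pv0.1 ord0) ck_ge0.
- exact: mulr_ge0 a_ge0 ck_ge0.
- apply/andP; split; first by apply: mulr_ge0; rewrite ?exprn_ge0.
  by apply: le_trans (ler_piMr a_ge0 ck_le1) _; lra.
rewrite mulrA [X in _ + X]mulrA -mulrDl mean exprS mulrA.
exact: ler_wpM2r.
Qed.

End Phase1.

Lemma two_phase_loss01 (R : realType) T t i : 0 <= two_phase_loss R T t i <= 1.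
Proof.
by rewrite /two_phase_loss; case: ifP => _; case: (i == ord0); rewrite /= ?lexx ?ler01.
Qed.

Lemma two_phase_loss_phase1 (R : realType) T s : (s < T %/ 100)%N ->
  two_phase_loss R T s.+1 ord0 = 1 /\ two_phase_loss R T s.+1 ord_max = 0.
Proof. by move=> s_lt; rewrite /two_phase_loss s_lt eqxx. Qed.

Theorem claim2 (R : realType) (etaT gammaT : nat -> R) :
  (forall T : nat, (0 < T)%N -> (100 %| T)%N ->
     valid_params 2 (etaT T) (gammaT T) /\
     nontrivial_regime T (etaT T) (gammaT T)) ->
  exists T0 : nat, forall T : nat, (T0 <= T)%N -> (0 < T)%N -> (100 %| T)%N ->
    wsu_expect (etaT T) (gammaT T) (@two_phase_loss R T) T
      (sq_dev_sum (etaT T) (gammaT T) (@two_phase_loss R T) T ord0)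
    >= 1 / 1600%:R * (T%:R * 2%:R / gammaT T).
Proof.
move=> params_regime; exists (1100 ^ 6)%N => T T_ge T_gt0 T_div.
have [params [eta_lb _]] := params_regime T T_gt0 T_div.
have T_ge_R : 1100%:R ^+ 6 <= T%:R :> R by rewrite -natrX ler_nat.
have [/andP[eta_gt0 _] [/andP[g_gt0 g_lt] _]] := params.
have eta_range : 0 < etaT T <= gammaT T / 4%:R by rewrite eta_gt0 valid_params2_eta_le.
have g_range : 0 < gammaT T <= 1 / 2%:R by rewrite g_gt0 ltW.
rewrite wsu_expect_sq_dev_sum; set init := (0%N, _).
have init_pv : prob_vec init.2 := prob_vec_uniform R (isT : (0 < 2)%N).
have init_le : init.2 ord0 <= 1 / 2%:R by [].
apply: le_trans (phase1_var_sum_ge T_ge_R T_div g_range eta_range eta_lb) _.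
apply: le_trans (phase1_expected_sq_dev_ge params (@two_phase_loss01 R T)
  (@two_phase_loss_phase1 R T) init_pv init_le (leqnn (T %/ 100))) _.
exact: (expected_sq_dev_mono (isT : (0 < 2)%N) params (@two_phase_loss01 R T) ord0 init_pv
  (leq_div T 100)).
Qed.
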